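(* For $n\ge 6$ consider partitions of $n$ with parts $q_1\ge q_2\ge\dots\ge q_h$ such that $h\ge 4$, $q_j-q_{j+1}\in\{0,1\}$ for all $1\le j<h$, $q_1=q_2$, and $q_{h-2}=3$, $q_{h-1}=2$, $q_h=1$. Let $e'(n)$ (resp. $o'(n)$) be the number of such partitions with an even (resp. odd) number $h$ of parts. For an integer $t$ put $P_1(t)=\tfrac12(3t^2+t+4)$, $P_2(t)=\tfrac12(3(t+1)^2-t-1)$, $P_3(t)=\tfrac12(3(t+1)^2-t+3)$, $P_4(t)=\tfrac12(3(t+1)^2+t+1)$. Then for every integer $n\ge 6$: (a) $e'(n)=o'(n)$ if $n\notin\{P_1(t),P_2(t),P_3(t),P_4(t)\}$ for every integer $t\ge 2$; (b) $e'(n)=o'(n)+1$ if $n=P_1(t)$ or $n=P_4(t)$ for some integer $t\ge 2$; (c) $e'(n)=o'(n)-1$ if $n=P_2(t)$ or $n=P_3(t)$ for some integer $t\ge 2$. *)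

From mathcomp Require Import all_boot.
Set Implicit Arguments. Unset Strict Implicit. Unset Printing Implicit Defensive.

Definition step01 (a b : nat) : bool := (b <= a) && (a <= b.+1).

Definition valid_part (n : nat) (s : seq nat) : bool :=
  [&& 4 <= size s,
      sumn s == n,
      sorted step01 s,
      nth 0 s 0 == nth 0 s 1 &
      drop (size s - 3) s == [:: 3; 2; 1]].

(* Every such partition has h <= n parts, each part in 1..n, so it is
   represented by an h.-tuple of 'I_n.+1 with h < n.+1. *)
Definition num_parts_with (n : nat) (P : nat -> bool) : nat :=
  \sum_(h < n.+1 | P h) #|[pred t : h.-tuple 'I_n.+1 | valid_part n (map val t)]|.

Definition e' (n : nat) : nat := num_parts_with n (fun h => ~~ odd h).
Definition o' (n : nat) : nat := num_parts_with n odd.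

(* the P_i(t) are always integers (numerators even) *)
Definition P1 (t : nat) : nat := (3 * t ^ 2 + t + 4) %/ 2.
Definition P2 (t : nat) : nat := (3 * (t + 1) ^ 2 - t - 1) %/ 2.
Definition P3 (t : nat) : nat := (3 * (t + 1) ^ 2 - t + 3) %/ 2.
Definition P4 (t : nat) : nat := (3 * (t + 1) ^ 2 + t + 1) %/ 2.

(* A partition whose parts are 1, 2, ..., b-1 once each and then b, b+1, ... with
   multiplicities w = [:: w_0; w_1; ...], all positive, is determined by w; the partitions
   counted by e'(n) and o'(n) are those with b = 3 whose largest part occurs at least twice,
   and they have sumn w + 2 parts.  Sign the sequences w by (-1)^(sumn w) and restrict to
   those whose last entry is at least b.  As in Franklin's proof of the pentagonal number
   theorem, the ones with last entry b and at least two entries are paired with opposite sign,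
   by merging the last two entries and raising the first one, with the ones whose first entry
   is at least 2 and last entry exceeds b, except [:: b] and [:: b+1] of weights k(3k-1)/2 and
   k(3k+1)/2 for k = b; the ones with first entry 1 are, once it is dropped, the sequences for
   b + 1 with the opposite sign.  So the signed count for b is, up to the sign (-1)^b, the
   number of k >= b with m = k(3k-1)/2 minus the number with m = k(3k+1)/2.  For b = 3 the
   partitions of the corollary split into those whose largest part occurs at least three times
   (the signed count for n), those where it occurs exactly twice (merging the last two entries
   gives the signed count for n - 2), and 3 + 3 + 2 + 1 = 9; as pentagonal numbers of index at
   least 3 are never 2 apart, at most one of these terms survives. *)

From mathcomp Require Import all_boot all_algebra zify ring.
Import GRing.Theory.
Set Implicit Arguments. Unset Strict Implicit. Unset Printing Implicit Defensive.

Section BigBijection.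

Variables (R : Type) (idx : R) (op : Monoid.com_law idx) (I J : eqType).
Variables (r1 : seq I) (r2 : seq J) (P : pred I) (Q : pred J).

Lemma big_seq_bij (phi : I -> J) (F : I -> R) (G : J -> R) :
    uniq r1 -> uniq r2 -> {subset P <= r1} -> {subset Q <= r2} ->
    {in P &, injective phi} -> (forall s, P s -> Q (phi s)) ->
    (forall t, Q t -> exists2 s, P s & phi s = t) ->
    (forall s, P s -> G (phi s) = F s) ->
  \big[op/idx]_(s <- r1 | P s) F s = \big[op/idx]_(t <- r2 | Q t) G t.
Proof.
move=> r1_uniq r2_uniq P_r1 Q_r2 phi_inj PQ QP GF.
rewrite -big_filter -[RHS]big_filter.
rewrite (eq_big_seq (G \o phi)) => [|s]; last by rewrite mem_filter => /andP[/GF].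
rewrite -(big_map phi xpredT G); apply/perm_big/uniq_perm.
- rewrite map_inj_in_uniq ?filter_uniq // => s1 s2.
  by rewrite !mem_filter => /andP[Ps1 _] /andP[Ps2 _]; apply: phi_inj.
- by rewrite filter_uniq.
move=> t; rewrite mem_filter; apply/mapP/andP => [[s]|[/QP[s Ps <-] _]].
  by rewrite mem_filter => /andP[/PQ Qs _] ->; rewrite Q_r2.
by exists s; rewrite // mem_filter Ps P_r1.
Qed.

Lemma big_seq_can (phi : I -> J) (psi : J -> I) (F : I -> R) (G : J -> R) :
    uniq r1 -> uniq r2 -> {subset P <= r1} -> {subset Q <= r2} ->
    (forall s, P s -> Q (phi s)) -> (forall s, P s -> psi (phi s) = s) ->
    (forall t, Q t -> P (psi t)) -> (forall t, Q t -> phi (psi t) = t) ->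
    (forall s, P s -> G (phi s) = F s) ->
  \big[op/idx]_(s <- r1 | P s) F s = \big[op/idx]_(t <- r2 | Q t) G t.
Proof.
move=> r1_uniq r2_uniq P_r1 Q_r2 PQ phiK QP psiK.
apply: big_seq_bij => // [s1 s2 /phiK E1 /phiK E2 E12 | t Qt].
  by rewrite -E1 -E2 E12.
by exists (psi t); rewrite ?QP ?psiK.
Qed.

Lemma big_pred1_seq_if (F : I -> R) x :
    uniq r1 -> (P x -> x \in r1) ->
  \big[op/idx]_(s <- r1 | P s && (s == x)) F s = if P x then F x else idx.
Proof.
move=> r1_uniq; case Px: (P x) => x_r1; last first.
  by rewrite big_pred0 // => s; apply/negbTE; apply: contraFN Px => /andP[Ps /eqP <-].
rewrite (eq_bigl (pred1 x)); last by move=> s /=; case: (s =P x) => [->|]; rewrite ?Px ?andbF.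
by rewrite -big_filter filter_pred1_uniq ?x_r1 // big_seq1.
Qed.

End BigBijection.

Arguments big_seq_bij {R idx op I J r1 r2 P Q} phi {F G}.
Arguments big_seq_can {R idx op I J r1 r2 P Q} phi psi {F G}.

Definition bounded_seqs (m : nat) : seq (seq nat) :=
  flatten [seq map (fun t : h.-tuple 'I_m.+1 => map val t) (enum {: h.-tuple 'I_m.+1})
          | h <- iota 0 m.+1].

Lemma bounded_seqs_uniq m : uniq (bounded_seqs m).
Proof.
rewrite /bounded_seqs; elim: (iota 0 m.+1) (iota_uniq 0 m.+1) => //= h hs IH.
case/andP=> /negP h_hs /IH hs_uniq; rewrite cat_uniq hs_uniq andbT.
rewrite map_inj_uniq ?enum_uniq => [|t1 t2 /(inj_map val_inj)/val_inj//].
apply/hasPn => s /flattenP[_ /mapP[h' h'_hs ->] /mapP[t' _ ->]].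
apply/negP => /mapP[t _ /(congr1 size)]; rewrite !size_map !size_tuple => hh'.
by apply: h_hs; rewrite -hh'.
Qed.

Lemma mem_bounded_seqs m s : (s \in bounded_seqs m) = (size s <= m) && all (fun x => x <= m) s.
Proof.
apply/flattenP/andP => [[_ /mapP[h h_m ->] /mapP[t _ ->]]|[s_m s_le]].
  move: h_m; rewrite size_map size_tuple mem_iota ltnS => /andP[_ ->]; split=> //.
  by apply/allP => x /mapP[i _ ->]; rewrite -ltnS (valP i).
exists (map (fun t : (size s).-tuple 'I_m.+1 => map val t) (enum {: (size s).-tuple 'I_m.+1})).
  by apply/mapP; exists (size s); rewrite // mem_iota ltnS.
apply/mapP; exists (map_tuple (fun x => inord x : 'I_m.+1) (in_tuple s)); rewrite ?mem_enum //=.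
by rewrite -map_comp -[LHS]map_id; apply/eq_in_map => x /(allP s_le) x_m /=; rewrite inordK.
Qed.

Lemma bounded_seqsP m s :
  all (fun x => 0 < x) s -> sumn s <= m -> s \in bounded_seqs m.
Proof.
move=> s_pos s_m; rewrite mem_bounded_seqs; apply/andP; split.
  by apply: leq_trans s_m; elim: s s_pos => //= x s IH /andP[x0 /IH]; lia.
apply/allP => x x_s; apply: leq_trans s_m.
by elim: s x_s {s_pos} => //= y s IH; rewrite inE => /orP[/eqP->|/IH]; lia.
Qed.

Section SignedCount.
Local Open Scope ring_scope.

Lemma e'_sub_o' n :
  (e' n)%:Z - (o' n)%:Z = \sum_(s <- bounded_seqs n | valid_part n s) (-1) ^+ size s.
Proof.
rewrite /bounded_seqs big_flatten big_map -[iota 0 n.+1]/(index_iota 0 n.+1) big_mkord.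
under eq_bigr => h _.
  rewrite big_map big_enum_cond /= (eq_bigr (fun=> (-1) ^+ h)) => [|t _]; last first.
    by rewrite size_tuple.
  rewrite sumr_const -signr_odd.
over.
rewrite (bigID (fun h : 'I_n.+1 => odd h)) /= addrC /e' /o' /num_parts_with.
rewrite !(big_morph Posz PoszD (erefl 0%:Z)) -sumrN.
congr (_ + _); apply: eq_bigr => h; [move=> /negbTE|] => ->.
  by rewrite natz.
by rewrite mulNrn natz.
Qed.

End SignedCount.

(* [w] lists the multiplicities of the parts b, b+1, ... of the partition
   [parts_of b w ++ [:: b-1; ...; 1]] of [weight b w]; [mults b c m w] moreover asks the largest
   part to occur at least c times. *)
Fixpoint parts_of (b : nat) (w : seq nat) : seq nat :=
  if w is x :: w' then parts_of b.+1 w' ++ nseq x b else [::].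

Definition weight (b : nat) (w : seq nat) : nat := 'C(b, 2) + sumn (parts_of b w).

Definition mults (b c m : nat) (w : seq nat) : bool :=
  [&& all (fun x => 0 < x) w, c <= last 0 w & weight b w == m].

Lemma size_parts_of b w : size (parts_of b w) = sumn w.
Proof. by elim: w b => //= x w IH b; rewrite size_cat IH size_nseq addnC. Qed.

Lemma parts_of_rcons b w y : parts_of b (rcons w y) = nseq y (b + size w) ++ parts_of b w.
Proof.
elim: w b => [|x w IH] b /=; first by rewrite addn0 cats0.
by rewrite IH -catA addSnnS.
Qed.

Lemma mem_parts_of b w y : y \in parts_of b w -> b <= y.
Proof.
elim: w b => //= x w IH b; rewrite mem_cat => /orP[/IH|/nseqP[-> _]] //.
exact: ltnW.
Qed.

Lemma weight_rcons b w y : weight b (rcons w y) = weight b w + (b + size w) * y.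
Proof. by rewrite /weight parts_of_rcons sumn_cat sumn_nseq; lia. Qed.

Lemma weight_cons b x w : weight b (x :: w) + b = weight b.+1 w + x * b.
Proof. by rewrite /weight /= sumn_cat sumn_nseq binS bin1; lia. Qed.

Lemma sumn_le_weight b w : 0 < b -> sumn w <= weight b w.
Proof.
move=> b0; suff: b * sumn w <= sumn (parts_of b w) by rewrite /weight; nia.
elim: w b {b0} => [|x w IH] b /=; first by rewrite muln0.
by rewrite sumn_cat sumn_nseq; have := IH b.+1; nia.
Qed.

Lemma last_le_sumn w : last 0 w <= sumn w.
Proof. by case/lastP: w => // w y; rewrite last_rcons sumn_rcons leq_addl. Qed.

Lemma mults_le b c m w : 0 < b -> mults b c m w -> c <= m.
Proof.
move=> b0 /and3P[_ c_last /eqP <-].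
exact: leq_trans c_last (leq_trans (last_le_sumn w) (sumn_le_weight w b0)).
Qed.

Lemma mults_bounded b c m w : 0 < b -> mults b c m w -> w \in bounded_seqs m.
Proof.
move=> b0 /and3P[w_pos _ /eqP <-].
exact: bounded_seqsP w_pos (sumn_le_weight w b0).
Qed.

Lemma mults_rcons b c m w y :
  mults b c m (rcons w y) =
  [&& 0 < y, all (fun x => 0 < x) w, c <= y & weight b w + (b + size w) * y == m].
Proof. by rewrite /mults all_rcons last_rcons weight_rcons -andbA. Qed.

Lemma weight_cons1 b w : weight b (1 :: w) = weight b.+1 w.
Proof. by have := weight_cons b 1 w; lia. Qed.

Lemma weight_consS b x w : weight b (x.+1 :: w) = weight b (x :: w) + b.
Proof. by have := weight_cons b x.+1 w; have := weight_cons b x w; lia. Qed.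

Lemma mults_cons1 b c m w : 1 < c -> mults b c m (1 :: w) = mults b.+1 c m w.
Proof.
move=> c_gt1; rewrite /mults weight_cons1; case: w => [|x w] //=.
by rewrite leqNgt c_gt1 leqn0 (gtn_eqF (ltnW c_gt1)).
Qed.

Lemma mults_nil b c m : 0 < c -> mults b c m [::] = false.
Proof. by rewrite /mults /= leqn0 eqn0Ngt => ->. Qed.

Lemma mults_lastN b c m w : mults b c m w && (last 0 w != c) = mults b c.+1 m w.
Proof.
rewrite /mults ltn_neqAle [last 0 w == c]eq_sym.
by case: (c == last 0 w); rewrite /= ?andbT ?andbF.
Qed.

Lemma weight_seq1 b x : weight b [:: x] = 'C(b, 2) + b * x.
Proof. by rewrite /weight /= sumn_nseq mulnC. Qed.

Lemma parts_of_inj b w1 w2 : all (fun x => 0 < x) w1 -> all (fun x => 0 < x) w2 ->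
  parts_of b w1 = parts_of b w2 -> w1 = w2.
Proof.
elim: w1 b w2 => [|x1 w1 IH] b [|x2 w2] //=.
- by move=> _ /andP[x2_gt0 _] /(congr1 size); rewrite /= size_cat size_nseq size_parts_of; lia.
- by move=> /andP[x1_gt0 _] _ /(congr1 size); rewrite /= size_cat size_nseq size_parts_of; lia.
move=> /andP[x1_gt0 w1_pos] /andP[x2_gt0 w2_pos] E.
have count_b w x : count_mem b (parts_of b.+1 w ++ nseq x b) = x.
  rewrite count_cat count_nseq /= eqxx mul1n; apply/eqP; rewrite -[X in _ == X]add0n eqn_add2r.
  by apply/eqP/count_memPn/negP => /mem_parts_of; rewrite ltnn.
have x12 : x1 = x2 by rewrite -(count_b w1 x1) -(count_b w2 x2) E.
subst x2; congr (_ :: _); apply: (IH b.+1) => //.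
have sizes : size (parts_of b.+1 w1) = size (parts_of b.+1 w2).
  by move/(congr1 size): E; rewrite !size_cat !size_nseq; lia.
by move/eqP: E; rewrite eqseq_cat // => /andP[/eqP].
Qed.

Lemma path_parts_of b w tl : 0 < b -> all (fun x => 0 < x) w -> path step01 b.-1 tl ->
  path step01 (b + size w) (parts_of b w ++ b.-1 :: tl).
Proof.
have step_pred x : 0 < x -> step01 x x.-1 by rewrite /step01; lia.
elim: w b tl => [|x w IH] b tl b_gt0 /=; first by rewrite addn0 step_pred.
case: x => [//|x] /andP[_ w_pos] tl_path; rewrite -catA -addSnnS; apply: IH => //.
elim: x => [|x IHx] /=; first by rewrite tl_path step_pred.
by rewrite IHx /step01 leqnn leqnSn.
Qed.

Lemma step01_path_parts a s : path step01 a s ->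
  exists2 w, all (fun x => 0 < x) w & a :: s = parts_of (last a s) w.
Proof.
elim: s a => [|c s IH] a /=; first by exists [:: 1].
case/andP=> /andP[c_a a_c] /IH[w]; set l := last c s.
case/lastP: w => [//|w y]; rewrite all_rcons parts_of_rcons => /andP[y_gt0 w_pos] c_s.
have c_eq : c = l + size w by move: c_s; case: (y) y_gt0 => // y' _ [].
have [-> | a_neq_c] := eqVneq a c.
  exists (rcons w y.+1); first by rewrite all_rcons w_pos.
  by rewrite parts_of_rcons /= -c_s -c_eq.
exists (rcons (rcons w y) 1); first by rewrite !all_rcons y_gt0 w_pos.
rewrite !parts_of_rcons -c_s size_rcons /=.
by congr (_ :: _); move: a_neq_c; rewrite /step01 in c_a a_c; lia.
Qed.

Definition partition_of (w : seq nat) : seq nat := parts_of 3 w ++ [:: 2; 1].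

Lemma size_partition_of w : size (partition_of w) = (sumn w).+2.
Proof. by rewrite size_cat size_parts_of addn2. Qed.

Lemma sumn_partition_of w : sumn (partition_of w) = weight 3 w.
Proof. by rewrite sumn_cat /weight addnC. Qed.

Lemma partition_of_pos w : all (fun x => 0 < x) (partition_of w).
Proof.
rewrite all_cat andbT; apply/allP => x /mem_parts_of; exact: leq_trans.
Qed.

Lemma partition_of_head w : all (fun x => 0 < x) w ->
  (nth 0 (partition_of w) 0 == nth 0 (partition_of w) 1) = (1 < last 0 w).
Proof.
case/lastP: w => [//|w y]; rewrite all_rcons last_rcons => /andP[y_gt0 w_pos].
rewrite /partition_of parts_of_rcons; case: y y_gt0 => [//|[|y]] _ //=; last by rewrite eqxx.
case/lastP: w w_pos => [//|w z]; rewrite all_rcons parts_of_rcons size_rcons => /andP[z_gt0 _].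
by case: z z_gt0 => //= z _; rewrite addnS gtn_eqF.
Qed.

Lemma partition_of_tail w : all (fun x => 0 < x) w -> w != [::] ->
  drop (size (partition_of w) - 3) (partition_of w) = [:: 3; 2; 1].
Proof.
case: w => [//|[//|x] w] _ _.
have -> : partition_of (x.+1 :: w) = (parts_of 4 w ++ nseq x 3) ++ [:: 3; 2; 1].
  by rewrite /partition_of /= -!catA; congr (_ ++ _); elim: (x) => //= x' ->.
by rewrite size_cat addnK drop_size_cat.
Qed.

Lemma partition_of_valid n w : mults 3 2 n w -> valid_part n (partition_of w).
Proof.
case/and3P=> w_pos last_w /eqP wn; have w_nil : w != [::] by case: (w) last_w.
apply/and5P; split.
- by rewrite size_partition_of; have := last_le_sumn w; lia.
- by rewrite sumn_partition_of wn.
- by apply: (path_sorted (x := 3 + size w)); apply: (path_parts_of (tl := [:: 1])).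
- by rewrite partition_of_head.
- by rewrite partition_of_tail.
Qed.

Lemma valid_partition_of n s : valid_part n s -> exists2 w, mults 3 2 n w & partition_of w = s.
Proof.
case/and5P=> _ /eqP s_sum s_sorted s_head /eqP s_tail; set t := take (size s - 3) s.
have s_eq : s = rcons t 3 ++ [:: 2; 1] by rewrite cat_rcons -s_tail cat_take_drop.
have /step01_path_parts[w w_pos t_eq] : path step01 (head 3 t) (behead (rcons t 3)).
  by move: s_sorted; rewrite s_eq headI /= cat_path => /andP[].
have last_t : last (head 3 t) (behead (rcons t 3)) = 3.
  by rewrite -[RHS](last_rcons 0 t) headI.
have s_w : partition_of w = s by rewrite s_eq headI t_eq last_t.
exists w => //.
by rewrite /mults w_pos -partition_of_head // -sumn_partition_of s_w s_head s_sum eqxx.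
Qed.

Lemma partition_of_inj w1 w2 : all (fun x => 0 < x) w1 -> all (fun x => 0 < x) w2 ->
  partition_of w1 = partition_of w2 -> w1 = w2.
Proof.
move=> w1_pos w2_pos /(congr1 (fun s => take (size s - 2) s)).
by rewrite /partition_of !size_cat !addnK !take_size_cat //; apply: parts_of_inj.
Qed.

Definition merge_last (w : seq nat) : seq nat :=
  rev (if rev w is y :: x :: t then (x + y) :: t else rev w).

Definition split_last (c : nat) (w : seq nat) : seq nat :=
  rev (if rev w is y :: t then c :: (y - c) :: t else rev w).

Definition bump_head (w : seq nat) : seq nat := if w is x :: w' then x.+1 :: w' else w.

Definition unbump_head (w : seq nat) : seq nat := if w is x :: w' then x.-1 :: w' else w.

Lemma merge_last_rcons w x y : merge_last (rcons (rcons w x) y) = rcons w (x + y).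
Proof. by rewrite /merge_last !rev_rcons rev_cons revK. Qed.

Lemma split_last_rcons c w y : split_last c (rcons w y) = rcons (rcons w (y - c)) c.
Proof. by rewrite /split_last rev_rcons !rev_cons revK. Qed.

Lemma rcons2_neq1 (w : seq nat) x y z : rcons (rcons w x) y != [:: z].
Proof. by apply/eqP => /(congr1 size); rewrite !size_rcons. Qed.

Section MultSums.
Local Open Scope ring_scope.

Definition msum (b c m : nat) : int :=
  \sum_(w <- bounded_seqs m | mults b c m w) (-1) ^+ sumn w.

Variables b c m : nat.
Hypotheses (b_gt0 : (0 < b)%N) (c_gt0 : (0 < c)%N).

Lemma msum_merge_last : (c <= m)%N ->
  \sum_(w <- bounded_seqs m | (mults b c m w && (last 0%N w == c)) && (w != [:: c]))
    (-1) ^+ sumn w = msum b c.+1 (m - c).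
Proof.
move=> c_m; symmetry; apply: (big_seq_can (split_last c) merge_last).
- exact: bounded_seqs_uniq.
- exact: bounded_seqs_uniq.
- by move=> v; apply: mults_bounded.
- by move=> w /andP[/andP[/(mults_bounded b_gt0)]].
- case/lastP=> [|v y]; rewrite ?mults_rcons // split_last_rcons rcons2_neq1 andbT.
  case/and4P=> y_gt0 v_pos c_y /eqP wv; rewrite last_rcons eqxx !mults_rcons size_rcons.
  rewrite all_rcons weight_rcons c_gt0 leqnn subn_gt0 c_y v_pos /= andbT; apply/eqP; nia.
- case/lastP=> [//|v y]; rewrite mults_rcons => /and4P[_ _ /ltnW c_y _].
  by rewrite split_last_rcons merge_last_rcons subnK.
- case/lastP=> [|w y]; first by rewrite /= eq_sym eqn0Ngt c_gt0 andbF.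
  rewrite last_rcons => /andP[/andP[+ /eqP yc]]; subst y.
  case/lastP: w => [|w x]; first by rewrite eqxx.
  rewrite merge_last_rcons !mults_rcons all_rcons weight_rcons size_rcons.
  case/and4P=> _ /andP[x_gt0 ->] _ /eqP wm _; rewrite addn_gt0 x_gt0 /=.
  by apply/andP; split; [lia | apply/eqP; lia].
- case/lastP=> [|w y]; first by rewrite /= eq_sym eqn0Ngt c_gt0 andbF.
  rewrite last_rcons => /andP[/andP[_ /eqP ->]].
  case/lastP: w => [|w x]; first by rewrite eqxx.
  by rewrite merge_last_rcons split_last_rcons addnK.
- case/lastP=> [//|v y]; rewrite mults_rcons => /and4P[_ _ /ltnW c_y _].
  by rewrite split_last_rcons !sumn_rcons -addnA subnK.
Qed.

Lemma msum_head1 : (1 < c)%N ->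
  \sum_(w <- bounded_seqs m | mults b c m w && (head 0%N w == 1%N)) (-1) ^+ sumn w
    = - msum b.+1 c m.
Proof.
move=> c_gt1; rewrite /msum -sumrN; symmetry; apply: (big_seq_can (cons 1%N) behead).
- exact: bounded_seqs_uniq.
- exact: bounded_seqs_uniq.
- by move=> v; apply: mults_bounded.
- by move=> w /andP[/(mults_bounded b_gt0)].
- by move=> v; rewrite mults_cons1 // eqxx andbT.
- by [].
- by case=> [|x w] /andP[+ /eqP /= x1] //; rewrite x1 mults_cons1.
- by case=> [|x w] /andP[_] //= /eqP ->.
- by move=> v _; rewrite /= exprD expr1 mulN1r.
Qed.

Lemma msum_bump_head : (b <= m)%N ->
  \sum_(w <- bounded_seqs m | (mults b c m w && (head 0%N w != 1%N)) && (w != [:: c]))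
    (-1) ^+ sumn w = - msum b c (m - b).
Proof.
move=> b_m; rewrite /msum -sumrN; symmetry; apply: (big_seq_can bump_head unbump_head).
- exact: bounded_seqs_uniq.
- exact: bounded_seqs_uniq.
- by move=> v; apply: mults_bounded.
- by move=> w /andP[/andP[/(mults_bounded b_gt0)]].
- case=> [|x v]; first by rewrite mults_nil.
  case/and3P=> /= /andP[x_gt0 v_pos] c_last /eqP wv.
  rewrite /mults /= v_pos weight_consS wv subnK // eqxx eqSS -lt0n x_gt0 !andbT eqseq_cons.
  case: v {v_pos wv} c_last => [|y v] /= c_last; last by rewrite c_last andbF.
  by rewrite (leqW c_last) andbT eq_sym ltn_eqF.
- by case.
- case=> [|x v]; first by rewrite mults_nil.
  case/andP=> /andP[/and3P[/= /andP[x_gt0 v_pos] c_last /eqP wm] x_neq1] w_neq.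
  have x_gt1 : (1 < x)%N by rewrite ltn_neqAle eq_sym x_neq1.
  rewrite /mults /= v_pos -ltnS prednK // x_gt1 -wm -[in weight b (x :: v)](prednK x_gt0).
  rewrite weight_consS addnK eqxx andbT /=.
  case: v {v_pos wm} c_last w_neq => [|y v] /= c_x; rewrite ?c_x //.
  rewrite eqseq_cons eqxx andbT => x_neq_c.
  by rewrite -ltnS prednK // ltn_neqAle c_x eq_sym x_neq_c.
- by case=> [|x v] // /andP[/andP[/and3P[/andP[x_gt0 _] _ _] _] _]; rewrite /= prednK.
- by case=> [|x v]; rewrite ?mults_nil // => _; rewrite /= addSn exprS mulN1r.
Qed.

Lemma msum_eq0 : (m < c)%N -> msum b c m = 0.
Proof.
move=> m_c; rewrite /msum big_pred0 // => w.
by apply: contraTF m_c => /(mults_le b_gt0); rewrite -leqNgt.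
Qed.

Lemma msum_split_last : (c <= m)%N ->
  msum b c m = msum b c.+1 m + (m == weight b [:: c])%:R * (-1) ^+ c + msum b c.+1 (m - c).
Proof.
move=> c_m; rewrite {1}/msum (bigID (fun w => last 0%N w == c)) /= addrC.
rewrite (eq_bigl _ _ (mults_lastN b c m)) -/(msum b c.+1 m) -addrA; congr (_ + _).
rewrite (bigID (fun w => w == [:: c])) /= msum_merge_last //; congr (_ + _).
rewrite big_pred1_seq_if ?bounded_seqs_uniq //; last by case/andP=> /(mults_bounded b_gt0).
rewrite /mults /= c_gt0 leqnn eqxx andbT eq_sym.
by case: (m == _); rewrite /= ?addn0 ?mul1r ?mul0r.
Qed.

Lemma msum_split_head : (1 < c)%N -> (b <= m)%N ->
  msum b c m = - msum b.+1 c m + (m == weight b [:: c])%:R * (-1) ^+ c - msum b c (m - b).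
Proof.
move=> c_gt1 b_m; rewrite {1}/msum (bigID (fun w => head 0%N w == 1%N)) /= msum_head1 //.
rewrite -addrA; congr (_ + _).
rewrite (bigID (fun w => w == [:: c])) /= msum_bump_head //; congr (_ + _).
rewrite big_pred1_seq_if ?bounded_seqs_uniq //; last by case/andP=> /(mults_bounded b_gt0).
rewrite /mults /= c_gt0 leqnn (gtn_eqF c_gt1) andbT eq_sym.
by case: (m == _); rewrite /= ?addn0 ?mul1r ?mul0r.
Qed.

End MultSums.

Section PartitionSum.
Local Open Scope ring_scope.

Lemma sum_valid_parts n :
  \sum_(s <- bounded_seqs n | valid_part n s) (-1) ^+ size s = msum 3 2 n.
Proof.
symmetry; apply: (big_seq_bij partition_of).
- exact: bounded_seqs_uniq.
- exact: bounded_seqs_uniq.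
- by move=> w; apply: mults_bounded.
- move=> s /valid_partition_of[w /and3P[_ _ /eqP wn] <-].
  by apply: bounded_seqsP (partition_of_pos w) _; rewrite sumn_partition_of wn.
- by move=> w1 w2 /and3P[w1_pos _ _] /and3P[w2_pos _ _]; apply: partition_of_inj.
- exact: partition_of_valid.
- exact: valid_partition_of.
- by move=> w _; rewrite size_partition_of !exprS mulrA mulrNN !mul1r.
Qed.

End PartitionSum.

(* k(3k-1)/2 and k(3k+1)/2 *)
Definition pentagonal (k : nat) : nat := 'C(k, 2) + k * k.
Definition second_pentagonal (k : nat) : nat := pentagonal k + k.

Definition gen_pentagonal (b m : nat) : Prop :=
  exists2 k, b <= k & m = pentagonal k \/ m = second_pentagonal k.

Lemma pentagonal_double k : 2 * pentagonal k + k = 3 * (k * k).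
Proof. by elim: k => // k; rewrite /pentagonal binS bin1; lia. Qed.

Lemma second_pentagonal_double k : 2 * second_pentagonal k = 3 * (k * k) + k.
Proof. by have := pentagonal_double k; rewrite /second_pentagonal; lia. Qed.

Lemma pentagonal_inj : injective pentagonal.
Proof.
move=> k j; have := pentagonal_double k; have := pentagonal_double j.
by case: (ltngtP k j); nia.
Qed.

Lemma second_pentagonal_inj : injective second_pentagonal.
Proof.
move=> k j; have := second_pentagonal_double k; have := second_pentagonal_double j.
by case: (ltngtP k j); nia.
Qed.

Lemma pentagonal_neq_second k j : 0 < k -> pentagonal k != second_pentagonal j.
Proof.
move=> k_gt0; apply/eqP; have := pentagonal_double k; have := second_pentagonal_double j.
by case: (ltngtP k j); nia.
Qed.

Lemma leq_pentagonal k : k <= pentagonal k.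
Proof. by have := pentagonal_double k; nia. Qed.

Lemma gen_pentagonal_ge12 m : gen_pentagonal 3 m -> 12 <= m.
Proof.
case=> k k3 [] ->; last apply: leq_trans (leq_addr _ _).
all: by have := pentagonal_double k; nia.
Qed.

Lemma gen_pentagonal_add2 m : gen_pentagonal 3 m -> ~ gen_pentagonal 3 (m + 2).
Proof.
case=> k k3 Em [j j3 Em2]; have := pentagonal_double k; have := pentagonal_double j.
have := second_pentagonal_double k; have := second_pentagonal_double j.
by case: Em Em2 => -> [] E; case: (ltngtP k j); nia.
Qed.

Section Franklin.
Local Open Scope ring_scope.

(* Franklin's involution: the two splittings share [msum b b.+1 (m - b)] with opposite signs. *)
Lemma msum_diag_rec b m : (0 < b)%N -> (b <= m)%N ->
  msum b b m = - msum b.+1 b.+1 m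
    + (-1) ^+ b * ((m == pentagonal b)%:R - (m == second_pentagonal b)%:R).
Proof.
move=> b_gt0 b_m; rewrite msum_split_last // msum_split_head ?ltnS //.
rewrite !weight_seq1 /second_pentagonal /pentagonal mulnS [(b + _)%N]addnC addnA exprS.
ring.
Qed.

Lemma msum_diag b m : (0 < b)%N ->
  (-1) ^+ b * msum b b m
    = \sum_(b <= k < m.+1) ((m == pentagonal k)%:R - (m == second_pentagonal k)%:R).
Proof.
have [d] := ubnP (m.+1 - b); elim: d b => [|d IH] b //= m_b b_gt0.
have [b_m | m_b'] := leqP b m; last by rewrite big_geq // msum_eq0 ?mulr0.
rewrite big_ltn ?ltnS // -IH ?ltnS //; last lia.
by rewrite msum_diag_rec // mulrDr signrMK exprS mulN1r mulrN mulNr addrC.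
Qed.

Lemma msum_pentagonal b k : (0 < b)%N -> (b <= k)%N -> msum b b (pentagonal k) = (-1) ^+ b.
Proof.
move=> b_gt0 b_k; rewrite -[LHS](signrMK b) msum_diag // -[RHS]mulr1; congr (_ * _).
rewrite (eq_big_nat _ _ (F2 := fun j => if j == k then 1 else 0)) => [|j _].
  by rewrite -big_mkcond big_nat1_eq b_k ltnS leq_pentagonal.
rewrite (inj_eq pentagonal_inj) eq_sym (negbTE (pentagonal_neq_second _ _)) ?subr0.
  by case: (j == k).
exact: leq_trans b_k.
Qed.

Lemma msum_second_pentagonal b k : (0 < b)%N -> (b <= k)%N ->
  msum b b (second_pentagonal k) = - (-1) ^+ b.
Proof.
move=> b_gt0 b_k; rewrite -[LHS](signrMK b) msum_diag // -[RHS]mulrN1; congr (_ * _).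
rewrite (eq_big_nat _ _ (F2 := fun j => if j == k then -1 else 0)) => [|j /andP[b_j _]].
  by rewrite -big_mkcond big_nat1_eq b_k ltnS leq_addl.
rewrite (inj_eq second_pentagonal_inj) eq_sym (negbTE (pentagonal_neq_second _ _)).
  by rewrite eq_sym sub0r; case: (j == k).
exact: leq_trans b_j.
Qed.

Lemma msum_not_gen_pentagonal b m : (0 < b)%N -> ~ gen_pentagonal b m -> msum b b m = 0.
Proof.
move=> b_gt0 not_pent; rewrite -[LHS](signrMK b) msum_diag // big_nat big1 ?mulr0 //.
move=> k /andP[b_k _].
have [m_pent | _] := eqP; first by case: not_pent; exists k; [|left].
have [m_pent | _] := eqP; first by case: not_pent; exists k; [|right].
by rewrite subrr.
Qed.

End Franklin.

Lemma P1E t : P1 t = second_pentagonal t + 2.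
Proof.
rewrite /P1 -(mulKn (second_pentagonal t + 2) (isT : 0 < 2)); congr (_ %/ 2).
by have := second_pentagonal_double t; rewrite expnS expn1; lia.
Qed.

Lemma P2E t : P2 t = pentagonal t.+1.
Proof.
rewrite /P2 -(mulKn (pentagonal t.+1) (isT : 0 < 2)); congr (_ %/ 2).
by have := pentagonal_double t.+1; rewrite expnS expn1; lia.
Qed.

Lemma P3E t : P3 t = pentagonal t.+1 + 2.
Proof.
rewrite /P3 -(mulKn (pentagonal t.+1 + 2) (isT : 0 < 2)); congr (_ %/ 2).
by have := pentagonal_double t.+1; rewrite expnS expn1; lia.
Qed.

Lemma P4E t : P4 t = second_pentagonal t.+1.
Proof.
rewrite /P4 -(mulKn (second_pentagonal t.+1) (isT : 0 < 2)); congr (_ %/ 2).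
by have := second_pentagonal_double t.+1; rewrite expnS expn1; lia.
Qed.

Section Corollary.
Local Open Scope ring_scope.

(* The term for 9 is the partition 3 + 3 + 2 + 1. *)
Lemma e'_sub_o'_msum n : (2 <= n)%N ->
  (e' n)%:Z - (o' n)%:Z = msum 3 3 n + (n == 9%N)%:R + msum 3 3 (n - 2).
Proof. by move=> n2; rewrite e'_sub_o' sum_valid_parts msum_split_last // weight_seq1 mulr1. Qed.

Lemma e'_sub_o'_gen_pentagonal n : gen_pentagonal 3 n ->
  (e' n)%:Z - (o' n)%:Z = msum 3 3 n.
Proof.
move=> pent_n; have n12 := gen_pentagonal_ge12 pent_n.
have not_pent : ~ gen_pentagonal 3 (n - 2).
  by move/gen_pentagonal_add2; rewrite subnK //; apply: leq_trans n12.
rewrite e'_sub_o'_msum ?(leq_trans _ n12) // (msum_not_gen_pentagonal _ not_pent) //.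
by case: eqP => [|_]; [lia | rewrite /= !addr0].
Qed.

Lemma e'_sub_o'_gen_pentagonal_add2 n : gen_pentagonal 3 n ->
  (e' (n + 2))%:Z - (o' (n + 2))%:Z = msum 3 3 n.
Proof.
move=> pent_n; have n12 := gen_pentagonal_ge12 pent_n.
rewrite e'_sub_o'_msum ?leq_addl // addnK.
rewrite (msum_not_gen_pentagonal _ (gen_pentagonal_add2 pent_n)) //.
by case: eqP => [|_]; [lia | rewrite /= !add0r].
Qed.

Lemma e'_sub_o'_P1 t : (2 <= t)%N -> (e' (P1 t))%:Z - (o' (P1 t))%:Z = 1.
Proof.
move=> t2; have [-> | t3] : t = 2 \/ (3 <= t)%N by lia.
  by rewrite e'_sub_o'_msum // !msum_not_gen_pentagonal // => /gen_pentagonal_ge12.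
rewrite P1E e'_sub_o'_gen_pentagonal_add2 ?msum_second_pentagonal //.
by exists t => //; right.
Qed.

Lemma e'_sub_o'_P2 t : (2 <= t)%N -> (e' (P2 t))%:Z - (o' (P2 t))%:Z = -1.
Proof.
move=> t2; rewrite P2E e'_sub_o'_gen_pentagonal ?msum_pentagonal //.
by exists t.+1 => //; left.
Qed.

Lemma e'_sub_o'_P3 t : (2 <= t)%N -> (e' (P3 t))%:Z - (o' (P3 t))%:Z = -1.
Proof.
move=> t2; rewrite P3E e'_sub_o'_gen_pentagonal_add2 ?msum_pentagonal //.
by exists t.+1 => //; left.
Qed.

Lemma e'_sub_o'_P4 t : (2 <= t)%N -> (e' (P4 t))%:Z - (o' (P4 t))%:Z = 1.
Proof.
move=> t2; rewrite P4E e'_sub_o'_gen_pentagonal ?msum_second_pentagonal //.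
by exists t.+1 => //; right.
Qed.

Lemma e'_sub_o'_generic n : (6 <= n)%N ->
    (forall t, (2 <= t)%N -> n <> P1 t /\ n <> P2 t /\ n <> P3 t /\ n <> P4 t) ->
  (e' n)%:Z - (o' n)%:Z = 0.
Proof.
move=> n6 notP.
have n_neq9 : (n == 9)%N = false by apply/eqP => n9; case: (notP 2 isT); rewrite n9.
have notP_pred k : (3 <= k)%N -> n <> P1 k.-1 /\ n <> P2 k.-1 /\ n <> P3 k.-1 /\ n <> P4 k.-1.
  by move=> k3; apply: notP; lia.
rewrite e'_sub_o'_msum; last lia.
rewrite n_neq9 !msum_not_gen_pentagonal //.
- case=> k k3 [] n_eq; first by have [_ [_ []]] := notP_pred k k3; rewrite P3E prednK; lia.
  by have [] := notP k (ltnW k3); rewrite P1E; lia.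
- case=> k k3 [] n_eq; first by have [_ []] := notP_pred k k3; rewrite P2E prednK; lia.
  by have [_ [_ [_]]] := notP_pred k k3; rewrite P4E prednK; lia.
Qed.

End Corollary.

Theorem corollary4p9 (n : nat) (hn : 6 <= n) :
  ((forall t : nat, 2 <= t ->
      n <> P1 t /\ n <> P2 t /\ n <> P3 t /\ n <> P4 t) ->
     e' n = o' n)
  /\ ((exists2 t : nat, 2 <= t & n = P1 t \/ n = P4 t) -> e' n = (o' n).+1)
  /\ ((exists2 t : nat, 2 <= t & n = P2 t \/ n = P3 t) -> (e' n).+1 = o' n).
Proof.
split; [|split].
- by move=> notP; have := e'_sub_o'_generic hn notP; lia.
- by case=> t t2 [->|->]; [have := e'_sub_o'_P1 t2 | have := e'_sub_o'_P4 t2]; lia.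
- by case=> t t2 [->|->]; [have := e'_sub_o'_P2 t2 | have := e'_sub_o'_P3 t2]; lia.
Qed.
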